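(* Let $K \subset \mathbb R^3$ be a regular convex cone whose boundary is of class $C^k$, $k \geq 5$, and positively curved, and let $\gamma \subset \mathbb{RP}^2$ be the projective image of $\partial K$. Let $\alpha,\beta$ be $2\pi$-periodic real functions of class $C^{k-4}$, $C^{k-5}$ respectively, and let $y:\mathbb R \to \mathbb R^3$ be a $2\pi$-periodic solution of \[ y''' + 2\alpha y' + \alpha' y + \beta y = 0 \] such that $\det(y'',y',y) \equiv 1$, the projective image of $y$ is $\gamma$, and $y(t)$ makes exactly one turn around $K$ along $\partial K$ as $t$ runs over one period. Set $Y = (y''+\alpha y, y', y)$ (a $3\times 3$ matrix with these columns). Let $K^*$ be the dual cone of $K$ and $\gamma^*$ the projective image of $\partial K^*$ (the dual projective curve of $\gamma$). Then there exists a vector-valued solution $z:\mathbb R\to\mathbb R^3$ of the adjoint equation \[ z''' + 2\alpha z' + \alpha' z - \beta z = 0 \] which is a lift of $\gamma^*$ and satisfies $\det(z'',z',z) \equiv 1$, and the matrix $Z = (z''+\alpha z, z', z) \in SL(3,\mathbb R)$ is given by $Z = Y^{-T}Q$, where \[ Q = \begin{pmatrix} 0 & 0 & 1 \\ 0 & -1 & 0 \\ 1 & 0 & 0 \end{pmatrix}. \]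
   Context: A regular convex cone is a closed convex cone with non-empty interior containing no lines. The dual cone $K^*$ is the set of linear functionals nonnegative on $K$, identified with vectors in $\mathbb R^3$ via the standard inner product. ''Positively curved boundary'' means the boundary $\partial K\setminus\{0\}$ has everywhere positive curvature (in the directions transverse to the rays), so that its projective image $\gamma$ is a simple closed strictly convex curve without inflection points. A lift of a curve in $\mathbb{RP}^2$ is a curve in $\mathbb R^3\setminus\{0\}$ whose projective image is the given curve (pointwise in the parameter; here $z(t)$ projects to the point of $\gamma^*$ corresponding to the tangent line of $\gamma$ at the projective image of $y(t)$). *)

From HB Require Import structures.
From mathcomp Require Import all_boot all_order all_algebra.
From mathcomp Require Import all_classical all_reals all_analysis.
Set Implicit Arguments. Unset Strict Implicit. Unset Printing Implicit Defensive.
Import Order.TTheory GRing.Theory Num.Theory.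
Import numFieldNormedType.Exports.
Local Open Scope classical_set_scope.
Local Open Scope ring_scope.

Section Defs.
Variable R : realType.
Notation V := 'cV[R]_3.

Definition dot (u v : V) : R := (u^T *m v) 0 0.

Definition cols3 (a b c : V) : 'M[R]_3 :=
  \matrix_(i < 3, j < 3)
    (if (j : nat) == 0%N then a i 0 else if (j : nat) == 1%N then b i 0 else c i 0).

Definition is_convex_set (K : set V) : Prop :=
  forall x y (l : R), K x -> K y -> 0 <= l -> l <= 1 -> K (l *: x + (1 - l) *: y).

Definition is_cone (K : set V) : Prop :=
  forall x (l : R), K x -> 0 <= l -> K (l *: x).

Definition regular_convex_cone (K : set V) : Prop :=
  [/\ closed K, is_convex_set K, is_cone K, interior K !=set0 &
      forall x, K x -> K (- x) -> x = 0].

Definition cone_boundary (K : set V) : set V := closure K `\` interior K.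

Definition dual_cone (K : set V) : set V := [set f | forall x, K x -> 0 <= dot f x].

Definition same_ray (x p : V) : Prop := exists2 l : R, 0 < l & x = l *: p.

Definition Ck {W : normedModType R} (k : nat) (f : R -> W) : Prop :=
  (forall n, (n < k)%N -> forall x, derivable (iter n (@derive1 R W) f) x 1) /\
  continuous (iter k (@derive1 R W) f).

Definition periodic2pi {W : Type} (f : R -> W) : Prop :=
  forall t, f (t + 2 * pi) = f t.

Definition one_turn_along_boundary (K : set V) (c : R -> V) : Prop :=
  (forall t, cone_boundary K (c t) /\ c t != 0) /\
  (forall x, cone_boundary K x -> x != 0 ->
     exists t, [/\ 0 <= t, t < 2 * pi, same_ray x (c t) &
        forall s, 0 <= s -> s < 2 * pi -> same_ray x (c s) -> s = t]).

(* "The boundary of K is of class C^k and positively curved": the projective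
   image gamma of dK\{0} is a C^k simple closed curve without inflection
   points, i.e. it admits a 2pi-periodic C^k lift c running once along dK
   with det(c'', c', c) nowhere zero (regularity and nonvanishing curvature). *)
Definition Ck_positively_curved_boundary (k : nat) (K : set V) : Prop :=
  exists c : R -> V,
    [/\ Ck k c, periodic2pi c, one_turn_along_boundary K c &
        forall t, \det (cols3 (derive1 (derive1 c) t) (derive1 c t) (c t)) != 0].

Definition frame (alpha : R -> R) (y : R -> V) (t : R) : 'M[R]_3 :=
  cols3 (derive1 (derive1 y) t + alpha t *: y t) (derive1 y t) (y t).

Definition Qmat : 'M[R]_3 :=
  \matrix_(i < 3, j < 3)
    (if ((i : nat) == 0%N) && ((j : nat) == 2%N) then 1
     else if ((i : nat) == 1%N) && ((j : nat) == 1%N) then -1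
     else if ((i : nat) == 2%N) && ((j : nat) == 0%N) then 1 else 0).

Definition derivable3 (y : R -> V) : Prop :=
  forall t, [/\ derivable y t 1, derivable (derive1 y) t 1 &
                derivable (derive1 (derive1 y)) t 1].

(* z(t) represents the point of gamma* = P(dK* \ {0}) corresponding to the
   tangent line of gamma at [p]: up to a nonzero scalar, z(t) is a nonzero
   element of the dual cone annihilating p (the supporting/tangent plane). *)
Definition dual_lift_point (K : set V) (p q : V) : Prop :=
  q != 0 /\ exists2 c : R, c != 0 & dual_cone K (c *: q) /\ dot (c *: q) p = 0.

End Defs.

From HB Require Import structures.
From mathcomp Require Import all_boot all_order all_algebra.
From mathcomp Require Import all_classical all_reals all_analysis.
From mathcomp Require Import ring lra.
Import Order.TTheory GRing.Theory Num.Theory.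
Import numFieldNormedType.Exports.
Local Open Scope classical_set_scope.
Local Open Scope ring_scope.
Set Implicit Arguments. Unset Strict Implicit. Unset Printing Implicit Defensive.

(* The adjoint lift is z = y' x y.  Differentiating the cross product and using the equation
   for y gives z' = y'' x y and z'' = y'' x y' - 2 alpha z, from which the adjoint equation
   follows.  The columns of Z = (z'' + alpha z, z', z) are, up to order and sign, the cross
   products of pairs of columns of Y = (y'' + alpha y, y', y); hence Y^T Z = det Y * Q = Q
   and det Z = (det Y)^2 = 1.
   Geometrically z(t) is normal to the plane spanned by y(t) and y'(t), and this plane
   supports K at the boundary point y(t).  Indeed, if the plane contained an interior point
   a y(t) + b y'(t), then stepping along the curve by a multiple of -b would place a positive
   multiple of y(t) inside K; and if K had points strictly on both sides of the plane, a
   positive combination of such a point with an interior point of K would be an interior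
   point on the plane. *)

Lemma det_mx33 (R : comPzRingType) (A : 'M[R]_3) : \det A =
  A 0 0 * (A 1 1 * A 2 2 - A 1 2 * A 2 1)
  - A 0 1 * (A 1 0 * A 2 2 - A 1 2 * A 2 0)
  + A 0 2 * (A 1 0 * A 2 1 - A 1 1 * A 2 0).
Proof.
pose B (m n : nat) := A (inord m) (inord n).
have AB i j : A i j = B i j by rewrite /B !inord_val.
rewrite (expand_det_row _ 0) !big_ord_recl big_ord0 /cofactor.
rewrite !(expand_det_row _ 0) !big_ord_recl !big_ord0 /cofactor !det_mx11 !mxE /=.
rewrite !AB /= /bump /= !expr0 !expr1 /=; ring.
Qed.

Lemma ord3P (P : 'I_3 -> Prop) : P 0 -> P 1 -> P 2 -> forall i, P i.
Proof.
move=> P0 P1 P2 -[[|[|[|//]]] Hi].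
- by have -> : Ordinal Hi = 0 by apply/val_inj.
- by have -> : Ordinal Hi = 1 by apply/val_inj.
- by have -> : Ordinal Hi = 2 by apply/val_inj.
Qed.

Lemma col3P (T : Type) (u v : 'cV[T]_3) :
  u 0 0 = v 0 0 -> u 1 0 = v 1 0 -> u 2 0 = v 2 0 -> u = v.
Proof. by move=> *; apply/matrixP => i j; rewrite [j]ord1; elim/ord3P: i. Qed.

Lemma sum_ord3 (R : nmodType) (F : 'I_3 -> R) : \sum_(i < 3) F i = F 0 + F 1 + F 2.
Proof.
rewrite !big_ord_recl big_ord0 addr0 addrA.
have -> : lift ord0 ord0 = 1 :> 'I_3 by apply/val_inj.
by have -> : lift ord0 (lift ord0 ord0) = 2 :> 'I_3 by apply/val_inj.
Qed.

Section CrossProduct.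
Variable R : comPzRingType.
Implicit Types u v w : 'cV[R]_3.

Definition cross u v : 'cV[R]_3 := \col_(i < 3)
  (if (i : nat) == 0%N then u 1 0 * v 2 0 - u 2 0 * v 1 0
   else if (i : nat) == 1%N then u 2 0 * v 0 0 - u 0 0 * v 2 0
   else u 0 0 * v 1 0 - u 1 0 * v 0 0).

Lemma crossE u v i :
  cross u v i 0 = u (i + 1) 0 * v (i + 2) 0 - u (i + 2) 0 * v (i + 1) 0.
Proof.
by elim/ord3P: i; rewrite mxE /=; congr (u _ 0 * v _ 0 - u _ 0 * v _ 0); apply/val_inj.
Qed.

Lemma cross_self u : cross u u = 0.
Proof. by apply: col3P; rewrite !mxE /=; ring. Qed.

Section ThirdOrderRelation.
Variables (u3 u1 u0 : 'cV[R]_3) (a a' b : R).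
Hypothesis ode : u3 + (2 * a) *: u1 + a' *: u0 + b *: u0 = 0.

Let u3E i : u3 i 0 = - (2 * a) * u1 i 0 - a' * u0 i 0 - b * u0 i 0.
Proof. by move/(congr1 (fun u => u i 0)): ode; rewrite !mxE => h; rewrite -[LHS]subr0 -h; ring. Qed.

Lemma ode3_cross_u0 : cross u3 u0 = - (2 * a) *: cross u1 u0.
Proof. by apply: col3P; rewrite !mxE /= !u3E; ring. Qed.

Lemma ode3_cross_u1 : cross u3 u1 = (a' + b) *: cross u1 u0.
Proof. by apply: col3P; rewrite !mxE /= !u3E; ring. Qed.

End ThirdOrderRelation.

End CrossProduct.

Section CrossDeterminant.
Variable R : realType.
Implicit Types u v w x : 'cV[R]_3.
Implicit Types a b c : R.

Lemma dotZl c u x : dot (c *: u) x = c * dot u x.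
Proof. by rewrite /dot linearZ /= -scalemxAl mxE. Qed.

Lemma dotDZr u a b v w : dot u (a *: v + b *: w) = a * dot u v + b * dot u w.
Proof. by rewrite /dot mulmxDr -!scalemxAr !mxE. Qed.

Lemma dot_crossE u v x : dot (cross u v) x = \det (cols3 x u v).
Proof. by rewrite /dot det_mx33 !mxE sum_ord3 !mxE /=; ring. Qed.

Lemma dot_cross_r u v : dot (cross u v) v = 0.
Proof. by rewrite dot_crossE det_mx33 !mxE /=; ring. Qed.

Lemma cross_neq0 u v w : \det (cols3 w u v) != 0 -> cross u v != 0.
Proof. by apply: contra_neq => uv0; rewrite -dot_crossE uv0 /dot trmx0 mul0mx mxE. Qed.

Lemma cramer_cols3 u v w x : \det (cols3 w u v) *: x =
  \det (cols3 x u v) *: w + \det (cols3 w x v) *: u + \det (cols3 w u x) *: v.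
Proof. by apply: col3P; rewrite !det_mx33 !mxE /=; ring. Qed.

Lemma cross_orthogonal_span u v w x : \det (cols3 w u v) != 0 ->
  dot (cross u v) x = 0 -> exists a b, x = a *: u + b *: v.
Proof.
move=> d0; rewrite dot_crossE => dx.
exists (\det (cols3 w x v) / \det (cols3 w u v)), (\det (cols3 w u x) / \det (cols3 w u v)).
apply/(scalerI d0); rewrite cramer_cols3 dx scale0r add0r scalerDr !scalerA.
by rewrite ![\det (cols3 w u v) * _]mulrC !divfK.
Qed.

Lemma det_cols3_shear u v w a : \det (cols3 (u + a *: w) v w) = \det (cols3 u v w).
Proof. by rewrite !det_mx33 !mxE /=; ring. Qed.

Lemma det_cols3_cross u v w :
  \det (cols3 (cross u v) (cross u w) (cross v w)) = \det (cols3 u v w) ^+ 2.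
Proof. by rewrite !det_mx33 !mxE /=; ring. Qed.

Lemma cols3_cross_frame u2 u1 u0 a :
  (cols3 (u2 + a *: u0) u1 u0)^T *m
    cols3 (cross u2 u1 - a *: cross u1 u0) (cross u2 u0) (cross u1 u0)
  = \det (cols3 u2 u1 u0) *: Qmat R.
Proof.
apply/matrixP; elim/ord3P; elim/ord3P;
  by rewrite !mxE sum_ord3 !mxE /= det_mx33 !mxE /=; ring.
Qed.

End CrossDeterminant.

Section CurveCalculus.
Variable R : realFieldType.

Lemma is_derive_ext {W : normedModType R} (f g : R -> W) (t : R) (df : W) :
  f =1 g -> is_derive t 1 g df -> is_derive t 1 f df.
Proof. by move=> /funext ->. Qed.

Lemma is_derive_mul (f g : R -> R) (t df dg : R) :
  is_derive t 1 f df -> is_derive t 1 g dg ->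
  is_derive t 1 (fun s => f s * g s) (df * g t + f t * dg).
Proof.
move=> hf hg; apply: is_derive_eq (is_deriveM hf hg) _.
by rewrite /GRing.scale /= addrC mulrC.
Qed.

Lemma derive1_val {W : normedModType R} (f : R -> W) (t : R) (df : W) :
  is_derive t 1 f df -> derive1 f t = df.
Proof. by move=> hf; rewrite derive1E derive_val. Qed.

Lemma derivable_is_derive1 {W : normedModType R} (f : R -> W) (t : R) :
  derivable f t 1 -> is_derive t 1 f (derive1 f t).
Proof. by rewrite derive1E; exact: derivableP. Qed.

Lemma is_derive_sub {W : normedModType R} (f g : R -> W) (t : R) (df dg : W) :
  is_derive t 1 f df -> is_derive t 1 g dg ->
  is_derive t 1 (fun s => f s - g s) (df - dg).
Proof. by move=> hf hg; exact: is_deriveB. Qed.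

Lemma is_derive_mx m n (M : R -> 'M[R]_(m, n)) (t : R) (dM : 'M[R]_(m, n)) :
  (forall i j, is_derive t 1 (fun s => M s i j) (dM i j)) -> is_derive t 1 M dM.
Proof.
move=> hM; have dM1 : derivable M t 1 by apply/derivable_mxP => i j; exact: ex_derive.
by apply: DeriveDef => //; apply/matrixP => i j; rewrite derive_mx // mxE derive_val.
Qed.

Lemma is_derive_mx_entry m n (M : R -> 'M[R]_(m, n)) (t : R) (dM : 'M[R]_(m, n)) i j :
  is_derive t 1 M dM -> is_derive t 1 (fun s => M s i j) (dM i j).
Proof.
move=> hM; have dM1 : derivable M t 1 by exact: ex_derive.
have DM : 'D_1 M t = dM by exact: derive_val.
by apply: DeriveDef; [exact: (derivable_mxP M t 1).1 dM1 i j | rewrite -DM derive_mx // mxE].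
Qed.

Lemma is_derive_cross (a b : R -> 'cV[R]_3) (t : R) (da db : 'cV[R]_3) :
  is_derive t 1 a da -> is_derive t 1 b db ->
  is_derive t 1 (fun s => cross (a s) (b s)) (cross da (b t) + cross (a t) db).
Proof.
move=> ha hb; apply: is_derive_mx => i j; rewrite [j]ord1.
have hai k := is_derive_mx_entry k 0 ha; have hbi k := is_derive_mx_entry k 0 hb.
apply: is_derive_ext => [s|]; first exact: crossE.
apply: is_derive_eq
  (is_derive_sub (W := R) (is_derive_mul (hai _) (hbi _)) (is_derive_mul (hai _) (hbi _))) _.
by rewrite [RHS]mxE !crossE; ring.
Qed.

Lemma is_derive_scale m n (f : R -> R) (M : R -> 'M[R]_(m, n)) (t df : R) (dM : 'M[R]_(m, n)) :
  is_derive t 1 f df -> is_derive t 1 M dM ->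
  is_derive t 1 (fun s => f s *: M s) (df *: M t + f t *: dM).
Proof.
move=> hf hM; apply: is_derive_mx => i j.
apply: is_derive_ext => [s|]; first by rewrite mxE.
apply: is_derive_eq; first by apply: is_derive_mul => //; exact: is_derive_mx_entry.
by rewrite !mxE.
Qed.

Lemma derivable_approx {W : normedModType R} (f : R -> W) t :
  derivable f t 1 -> forall eps, 0 < eps -> exists2 d, 0 < d &
    forall h, `|h| < d -> `|f (h + t) - f t - h *: derive1 f t| <= eps * `|h|.
Proof.
move=> /cvg_ex [l fl] eps eps0.
have -> : derive1 f t = l by rewrite derive1E; exact: cvg_lim.
move/cvgrPdist_le : fl => /(_ eps eps0) /nbhs_ballP [d d0 fd].
exists d => // h hd; have [->|h0] := eqVneq h 0.
  by rewrite add0r subrr scale0r subr0 normr0 normr0 mulr0.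
have /fd /(_ h0) : ball 0 d h by rewrite -ball_normE /= sub0r normrN.
rewrite [_%:A]mulr1 => approx.
have -> : f (h + t) - f t - h *: l = - (h *: (l - h^-1 *: (f (h + t) - f t))).
  by rewrite scalerBr scalerA mulfV // scale1r opprB.
by rewrite normrN normrZ mulrC ler_wpM2r.
Qed.

End CurveCalculus.

Section ConvexCone.
Variable R : realType.
Implicit Types (K : set 'cV[R]_3) (p q w x : 'cV[R]_3).

Lemma interior_normP K p :
  interior K p <-> exists2 r, 0 < r & forall q, `|q - p| < r -> K q.
Proof.
rewrite /interior /=; split.
- move=> /nbhs_ballP [r r0 Kr]; exists r => // q qp.
  by apply: Kr; rewrite -ball_normE /= distrC.
- move=> [r r0 Kr]; apply/nbhs_ballP; exists r => //= q.
  by rewrite -ball_normE /= distrC; exact: Kr.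
Qed.

Lemma interior_ball_sub K x r p :
  (forall q, `|q - x| < r -> K q) -> `|p - x| < r -> interior K p.
Proof.
move=> Kr px; apply/interior_normP; exists (r - `|p - x|); first by rewrite subr_gt0.
move=> q qp; apply: Kr; rewrite -(subrK p q) -addrA.
by apply: le_lt_trans (ler_normD _ _) _; rewrite -ltrBrDr.
Qed.

Lemma convex_cone_add K x w :
  is_convex_set K -> is_cone K -> K x -> K w -> K (x + w).
Proof.
move=> cvK coneK Kx Kw.
have h0 : (0 : R) <= 1 / 2 by lra.
have h1 : 1 / 2 <= (1 : R) by lra.
have := coneK _ 2 (cvK x w (1 / 2) Kx Kw h0 h1) (ler0n _ 2).
by rewrite scalerDr !scalerA (_ : 1 - 1 / 2 = 1 / 2 :> R) ?mul1r ?mulfV ?scale1r //; field.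
Qed.

Lemma cone_ball_shift K x r c w :
  is_convex_set K -> is_cone K -> (forall q, `|q - x| < r -> K q) -> 0 < c -> K w ->
  forall q, `|q - (c *: x + w)| < c * r -> K q.
Proof.
move=> cvK coneK Kr c0 Kw q qx.
have -> : q = c *: (x + c^-1 *: (q - (c *: x + w))) + w.
  by rewrite scalerDr scalerA mulfV ?gt_eqF // scale1r addrCA opprD addNKr subrK.
apply: convex_cone_add => //; apply: coneK; last exact: ltW.
apply: Kr; rewrite addrAC subrr add0r normrZ gtr0_norm ?invr_gt0 //.
by rewrite ltr_pdivrMl.
Qed.

Lemma interior_cone_scale K l p :
  is_cone K -> 0 < l -> interior K (l *: p) -> interior K p.
Proof.
move=> coneK l0 /interior_normP [r r0 Kr]; apply/interior_normP.
exists (r / l); first exact: divr_gt0.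
move=> q qp; rewrite -[q](scalerK (lt0r_neq0 l0)).
apply: coneK; last by rewrite invr_ge0 ltW.
by apply: Kr; rewrite -scalerBr normrZ gtr0_norm // mulrC -ltr_pdivlMr.
Qed.

Lemma interior_cone_comb K e x l m :
  is_convex_set K -> is_cone K -> interior K e -> K x -> 0 < l -> 0 <= m ->
  interior K (l *: e + m *: x).
Proof.
move=> cvK coneK /interior_normP [r r0 Kr] Kx l0 m0; apply/interior_normP.
exists (l * r); first exact: mulr_gt0.
by apply: cone_ball_shift => //; exact: coneK.
Qed.

Lemma tangent_plane_interior K (y : R -> 'cV[R]_3) t a b :
  is_convex_set K -> is_cone K -> (forall s, K (y s)) -> derivable y t 1 ->
  interior K (a *: y t + b *: derive1 y t) -> interior K (y t).
Proof.
move=> cvK coneK Ky dy /interior_normP [r r0 Kr].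
have b1 : 0 < `|b| + 1 by rewrite ltr_pwDr.
have a1 : 0 < `|a| + 1 by rewrite ltr_pwDr.
have [d d0 approx] := derivable_approx dy (divr_gt0 r0 b1).
pose c := Num.min (d / (`|b| + 1)) (1 / (`|a| + 1)).
have c0 : 0 < c by rewrite lt_min !divr_gt0.
have cb : c * `|b| < d.
  apply: le_lt_trans (_ : d / (`|b| + 1) * `|b| < d).
    by rewrite ler_wpM2r // ge_min lexx.
  by rewrite mulrAC ltr_pdivrMr // ltr_pM2l // ltrDl.
have ca : 0 < c * a + 1.
  have : c * `|a| < 1.
    apply: le_lt_trans (_ : 1 / (`|a| + 1) * `|a| < 1).
      by rewrite ler_wpM2r // ge_min lexx orbT.
    by rewrite mul1r mulrC ltr_pdivrMr // mul1r ltrDl.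
  have : - `|a| <= a := lerNnormlW (lexx _).
  nra.
(* The step h cancels the y' component: c e + y (t + h) = (c a + 1) y t + o(h). *)
pose h := - (c * b).
have hc : `|h| = c * `|b| by rewrite normrN normrM gtr0_norm.
apply: (interior_cone_scale coneK ca).
apply: (interior_ball_sub (cone_ball_shift cvK coneK Kr c0 (Ky (h + t)))).
have -> : (c * a + 1) *: y t - (c *: (a *: y t + b *: derive1 y t) + y (h + t))
    = - (y (h + t) - y t - h *: derive1 y t).
  by apply: col3P; rewrite !mxE /h; ring.
rewrite normrN; apply: le_lt_trans (approx h _) _; first by rewrite hc.
rewrite hc mulrCA ltr_pM2l // mulrAC ltr_pdivrMr // ltr_pM2l //.
by rewrite ltrDl.
Qed.

Lemma tangent_plane_support K (y : R -> 'cV[R]_3) t n :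
  regular_convex_cone K -> (forall s, K (y s)) -> derivable y t 1 -> ~ interior K (y t) ->
  (forall x, dot n x = 0 -> exists a b, x = a *: derive1 y t + b *: y t) ->
  exists2 c, c != 0 & dual_cone K (c *: n).
Proof.
case=> _ cvK coneK [e Ke] _ Ky dy yt_bd span.
have off_plane x : interior K x -> dot n x != 0.
  move=> xint; apply/eqP => /span [b [a xE]]; apply: yt_bd.
  by rewrite xE addrC in xint; exact: tangent_plane_interior xint.
exists (dot n e); first exact: off_plane.
(* If n.e and n.x had opposite signs, this combination would be interior with n-component 0. *)
move=> x Kx; rewrite dotZl leNgt; apply/negP => neg.
have /off_plane : interior K ((- (dot n e * dot n x)) *: e + dot n e ^+ 2 *: x).
  by apply: interior_cone_comb => //; rewrite ?oppr_gt0 ?sqr_ge0.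
by rewrite dotDZr; apply/negP; rewrite negbK; apply/eqP; ring.
Qed.

End ConvexCone.

Section AdjointLift.
Variable R : realType.
Variables (alpha alpha' beta : R -> R) (y y1 y2 y3 : R -> 'cV[R]_3).
Implicit Type t : R.
Hypothesis Ialpha : forall t, is_derive t 1 alpha (alpha' t).
Hypothesis Iy : forall t, is_derive t 1 y (y1 t).
Hypothesis Iy1 : forall t, is_derive t 1 y1 (y2 t).
Hypothesis Iy2 : forall t, is_derive t 1 y2 (y3 t).
Hypothesis ode : forall t,
  y3 t + (2 * alpha t) *: y1 t + alpha' t *: y t + beta t *: y t = 0.

Local Notation z := (fun t => cross (y1 t) (y t)).

Lemma is_derive_adjoint_lift t : is_derive t 1 z (cross (y2 t) (y t)).
Proof. by apply: is_derive_eq (is_derive_cross (Iy1 t) (Iy t)) _; rewrite cross_self addr0. Qed.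

Lemma derive1_adjoint_lift : derive1 z = fun t => cross (y2 t) (y t).
Proof. by apply/funext => t; exact/derive1_val/is_derive_adjoint_lift. Qed.

Lemma is_derive_derive1_adjoint_lift t :
  is_derive t 1 (derive1 z) (cross (y2 t) (y1 t) - (2 * alpha t) *: z t).
Proof.
rewrite derive1_adjoint_lift; apply: is_derive_eq (is_derive_cross (Iy2 t) (Iy t)) _.
by rewrite (ode3_cross_u0 (ode t)) scaleNr addrC.
Qed.

Lemma derive2_adjoint_lift :
  derive1 (derive1 z) = fun t => cross (y2 t) (y1 t) - (2 * alpha t) *: z t.
Proof. by apply/funext => t; exact/derive1_val/is_derive_derive1_adjoint_lift. Qed.

Lemma is_derive_derive2_adjoint_lift t :
  is_derive t 1 (derive1 (derive1 z)) ((alpha' t + beta t) *: z t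
    - ((2 * alpha' t) *: z t + (2 * alpha t) *: cross (y2 t) (y t))).
Proof.
rewrite derive2_adjoint_lift; apply: is_derive_sub.
  apply: is_derive_eq (is_derive_cross (Iy2 t) (Iy1 t)) _.
  by rewrite cross_self addr0 (ode3_cross_u1 (ode t)).
by apply: is_derive_scale; last exact: is_derive_adjoint_lift.
Qed.

Lemma derivable3_adjoint_lift : derivable3 z.
Proof.
move=> t; have := is_derive_adjoint_lift t.
have := is_derive_derive1_adjoint_lift t; have := is_derive_derive2_adjoint_lift t.
by split; apply: ex_derive.
Qed.

Lemma adjoint_lift_ode t : derive1 (derive1 (derive1 z)) t + (2 * alpha t) *: derive1 z t
  + alpha' t *: z t - beta t *: z t = 0.
Proof.
rewrite (derive1_val (is_derive_derive2_adjoint_lift t)) derive1_adjoint_lift.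
by apply: col3P; rewrite !mxE; ring.
Qed.

Lemma det_adjoint_lift t :
  \det (cols3 (derive1 (derive1 z) t) (derive1 z t) (z t))
  = \det (cols3 (y2 t) (y1 t) (y t)) ^+ 2.
Proof.
rewrite derive2_adjoint_lift derive1_adjoint_lift /= -scaleNr det_cols3_shear.
exact: det_cols3_cross.
Qed.

Lemma frame_adjoint_lift t :
  (cols3 (y2 t + alpha t *: y t) (y1 t) (y t))^T *m frame alpha z t
  = \det (cols3 (y2 t) (y1 t) (y t)) *: Qmat R.
Proof.
rewrite /frame derive2_adjoint_lift derive1_adjoint_lift /= -(cols3_cross_frame _ _ _ (alpha t)).
congr (_ *m cols3 _ _ _); apply: col3P; rewrite !mxE; ring.
Qed.

End AdjointLift.

Theorem lemma2 (R : realType) (K : set 'cV[R]_3) (k : nat)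
  (alpha beta : R -> R) (y : R -> 'cV[R]_3) :
  regular_convex_cone K ->
  (5 <= k)%N ->
  Ck_positively_curved_boundary k K ->
  periodic2pi alpha -> periodic2pi beta ->
  Ck (k - 4) alpha -> Ck (k - 5) beta ->
  periodic2pi y -> derivable3 y ->
  (forall t, derive1 (derive1 (derive1 y)) t + (2 * alpha t) *: derive1 y t
             + derive1 alpha t *: y t + beta t *: y t = 0) ->
  (forall t, \det (cols3 (derive1 (derive1 y) t) (derive1 y t) (y t)) = 1) ->
  one_turn_along_boundary K y ->
  exists z : R -> 'cV[R]_3,
    [/\ derivable3 z,
        (forall t, derive1 (derive1 (derive1 z)) t + (2 * alpha t) *: derive1 z t
                   + derive1 alpha t *: z t - beta t *: z t = 0),
        (forall t, dual_lift_point K (y t) (z t)),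
        (forall t, \det (cols3 (derive1 (derive1 z) t) (derive1 z t) (z t)) = 1) &
        (forall t, frame alpha z t = (invmx (frame alpha y t))^T *m Qmat R)].
Proof.
(* Only three derivatives of y and one of alpha are used. *)
move=> Kreg k5 _ _ _ Calpha _ _ dy ode det1 [bd _].
have Ialpha (t : R) : is_derive t 1 alpha (derive1 alpha t).
  by apply: (derivable_is_derive1 (Calpha.1 0%N _ t)); rewrite subn_gt0.
have Iy (t : R) : is_derive t 1 y (derive1 y t).
  by have [d _ _] := dy t; exact: (derivable_is_derive1 d).
have Iy1 (t : R) : is_derive t 1 (derive1 y) (derive1 (derive1 y) t).
  by have [_ d _] := dy t; exact: (derivable_is_derive1 d).
have Iy2 (t : R) : is_derive t 1 (derive1 (derive1 y)) (derive1 (derive1 (derive1 y)) t).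
  by have [_ _ d] := dy t; exact: (derivable_is_derive1 d).
have Ky s : K (y s).
  by case: Kreg => /closure_id -> _ _ _ _; have [[]] := bd s.
have det_neq0 (t : R) : \det (cols3 (derive1 (derive1 y) t) (derive1 y t) (y t)) != 0.
  by rewrite det1 oner_neq0.
exists (fun t => cross (derive1 y t) (y t)); split.
- exact: (derivable3_adjoint_lift Ialpha Iy Iy1 Iy2 ode).
- exact: (adjoint_lift_ode Ialpha Iy Iy1 Iy2 ode).
- move=> t; split; first exact: cross_neq0 (det_neq0 t).
  have [[_ yt_bd] _] := bd t; have [dyt _ _] := dy t.
  have [c c0 dualK] := tangent_plane_support Kreg Ky dyt yt_bd
    (fun x => cross_orthogonal_span (det_neq0 t)).
  by exists c => //; split => //; rewrite dotZl dot_cross_r mulr0.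
- by move=> t; rewrite (det_adjoint_lift Iy Iy1 Iy2 ode) det1 expr1n.
- move=> t; have Yunit : frame alpha y t \in unitmx.
    by rewrite unitmxE /frame det_cols3_shear det1 unitr1.
  have := frame_adjoint_lift Iy Iy1 Iy2 ode t; rewrite det1 scale1r => <-.
  by rewrite mulmxA -trmx_mul mulmxV // trmx1 mul1mx.
Qed.
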